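(* A (horizontal or vertical) chute move sends a $\mathbf{u}$-compatible subset of $L$ to a $\mathbf{u}$-compatible subset of $L$. In particular it sends a concurrent vertex map $C$ to a concurrent vertex map $C'$ with $C'<_TC$. The analogous statement holds for an inverse (horizontal or vertical) chute move, except that then $C'>_TC$.
   Context: Let $\mathcal{Q}$ be a bipartite quiver with vertex set $V_{\mathcal{Q}}=V_{\rm source}\sqcup V_{\rm target}$ and arrows $h_1,\dots,h_r$, each $h_k$ from $\mathrm{s}(h_k)\in V_{\rm source}$ to $\mathrm{t}(h_k)\in V_{\rm target}$. Let $\mathbf{m}=(m_\gamma)$, $\mathbf{u}=(u_\gamma)$ be tuples of nonnegative integers indexed by $V_{\mathcal{Q}}$. For $k=1,\dots,r$ let $X^{(k)}$ be an $m_{\mathrm{t}(h_k)}\times m_{\mathrm{s}(h_k)}$ matrix of variables $x^{(k)}_{ij}$. For $\alpha\in V_{\rm target}$ with $r_1<\dots<r_s$ the indices of arrows with target $\alpha$, $A_\alpha=[X^{(r_1)}|\cdots|X^{(r_s)}]$; for $\beta\in V_{\rm source}$ with $r'_1<\dots<r'_t$ the indices of arrows with source $\beta$, $A_\beta$ is the stack of $X^{(r'_1)},\dots,X^{(r'_t)}$ top to bottom. $a_\gamma\times b_\gamma$ is the size of $A_\gamma$; $v_\alpha=\sum_{k:\mathrm{t}(h_k)=\alpha}u_{\mathrm{s}(h_k)}$, $v_\beta=\sum_{k:\mathrm{s}(h_k)=\beta}u_{\mathrm{t}(h_k)}$. Standing assumption: $0<u_\gamma\le\min(a_\gamma,b_\gamma)$,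 $u_\alpha\le v_\alpha$, $u_\beta\le v_\beta$. $L=\{(i,j,k):1\le k\le r,1\le i\le m_{\mathrm{t}(h_k)},1\le j\le m_{\mathrm{s}(h_k)}\}$; $\phi_\gamma$ sends a position $(p,q)$ of $A_\gamma$ to $(i,j,k)$ if that entry is $x^{(k)}_{ij}$; $D^\gamma=\phi_\gamma^{-1}(D)$. Coordinates $(i,j)$: $i$ row (downward), $j$ column (rightward). Diagonal chain of size $s$: $\{(i_1,j_1),\dots,(i_s,j_s)\}$ with $i_1<\dots<i_s$, $j_1<\dots<j_s$. $D\subseteq L$ is $\mathbf{u}$-compatible if no $D^\gamma$ contains a diagonal chain of size $u_\gamma+1$; a concurrent vertex map is a maximal (under inclusion) $\mathbf{u}$-compatible subset; all have the same cardinality. Chute moves on $D\subseteq L$: for $\alpha\in V_{\rm target}$, a horizontal chutable rectangle is $[i,i+1]\times[j,j+r-1]$ inside the grid of $A_\alpha$, $r\ge2$, with $D^\alpha\cap([i,i+1]\times[j,j+r-1])=\{(i+1,j),(i,j+r-1),(i+1,j+r-1)\}$; the horizontal chute move replaces $D$ by $D\cup\{\phi_\alpha(i,j)\}\setminus\{\phi_\alpha(i+1,j+r-1)\}$. For $\beta\in V_{\rm source}$, a vertical chutable rectangle is $[i,i+r-1]\times[j,j+1]$ inside the grid of $A_\beta$, $r\ge2$, with $D^\beta\cap$ it $=\{(i+r-1,j),(i,j+1),(i+r-1,j+1)\}$; the vertical chute move replaces $D$ by $D\cup\{\phi_\beta(i,j)\}\setminus\{\phi_\beta(i+r-1,j+1)\}$.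 An inverse chute move is the reverse of a chute move: if $D\to D'$ is a chute move then $D'\dashrightarrow D$ is an inverse chute move. Order: $(i,j,k)<_T(i',j',k')$ iff $k<k'$, or $k=k'$, $i<i'$, or $k=k'$, $i=i'$, $j<j'$. For concurrent vertex maps $C=\{P_1<_T\dots<_TP_N\}$, $C'=\{P'_1<_T\dots<_TP'_N\}$: $C<_TC'$ iff there is $t$ with $P_t<_TP'_t$ and $P_s=P'_s$ for all $s>t$. *)

From HB Require Import structures.
From mathcomp Require Import all_boot all_order.
From mathcomp Require Import finmap.
Set Implicit Arguments. Unset Strict Implicit. Unset Printing Implicit Defensive.
Local Open Scope fset_scope.

(* Conventions: all indices are 0-based (rows, columns, arrow indices).
   Arrows h_1..h_r are indexed by k : 'I_r (order preserved). *)

Section Quiver.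
Variables (VS VT : finType) (r : nat) (src : 'I_r -> VS) (tgt : 'I_r -> VT)
          (mS : VS -> nat) (mT : VT -> nat).

(* an element (i,j,k) of L, i.e. the variable x^{(k)}_{ij} *)
Definition pos := (nat * nat * 'I_r)%type.

Definition inL (P : pos) : bool :=
  let: (i, j, k) := P in (i < mT (tgt k)) && (j < mS (src k)).

(* ---------- target vertex alpha: A_alpha = [X^(r1) | ... | X^(rs)] ---------- *)
Definition off_tgt (k : 'I_r) : nat :=
  \sum_(k' < r | (k' < k) && (tgt k' == tgt k)) mS (src k').
Definition rows_tgt (a : VT) : nat := mT a.
Definition cols_tgt (a : VT) : nat := \sum_(k < r | tgt k == a) mS (src k).

Definition phi_tgt (a : VT) (pq : nat * nat) : option pos :=
  let: (p, q) := pq in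
  match [pick k : 'I_r | (tgt k == a) && (off_tgt k <= q < off_tgt k + mS (src k))] with
  | Some k => Some (p, q - off_tgt k, k)
  | None => None
  end.

(* ---------- source vertex beta: A_beta = stack of X^(r'1), ..., X^(r't) ---------- *)
Definition off_src (k : 'I_r) : nat :=
  \sum_(k' < r | (k' < k) && (src k' == src k)) mT (tgt k').
Definition rows_src (b : VS) : nat := \sum_(k < r | src k == b) mT (tgt k).
Definition cols_src (b : VS) : nat := mS b.

Definition phi_src (b : VS) (pq : nat * nat) : option pos :=
  let: (p, q) := pq in
  match [pick k : 'I_r | (src k == b) && (off_src k <= p < off_src k + mT (tgt k))] with
  | Some k => Some (p - off_src k, q, k)
  | None => None
  end.

Definition in_opt (D : {fset pos}) (o : option pos) : bool :=
  if o is Some P then P \in D else false.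

Definition Dtgt (a : VT) (D : {fset pos}) : pred (nat * nat) :=
  fun pq => [&& pq.1 < rows_tgt a, pq.2 < cols_tgt a & in_opt D (phi_tgt a pq)].
Definition Dsrc (b : VS) (D : {fset pos}) : pred (nat * nat) :=
  fun pq => [&& pq.1 < rows_src b, pq.2 < cols_src b & in_opt D (phi_src b pq)].

Definition has_diag_chain (S : pred (nat * nat)) (n : nat) : Prop :=
  exists c : seq (nat * nat),
    [/\ size c = n, all S c &
        sorted (fun x y => (x.1 < y.1) && (x.2 < y.2)) c].

Variables (uS : VS -> nat) (uT : VT -> nat).

Definition v_tgt (a : VT) : nat := \sum_(k < r | tgt k == a) uS (src k).
Definition v_src (b : VS) : nat := \sum_(k < r | src k == b) uT (tgt k).

Definition u_compatible (D : {fset pos}) : Prop :=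
  [/\ (forall P, P \in D -> inL P),
      (forall a, ~ has_diag_chain (Dtgt a D) (uT a).+1) &
      (forall b, ~ has_diag_chain (Dsrc b D) (uS b).+1)].

Definition concurrent_vertex_map (C : {fset pos}) : Prop :=
  u_compatible C /\ (forall D, u_compatible D -> C `<=` D -> D = C).

Definition horizontal_chute (D D' : {fset pos}) : Prop :=
  exists (a : VT) (i j l : nat),
    [/\ 2 <= l, i.+1 < rows_tgt a, j + l - 1 < cols_tgt a,
        (forall p q, i <= p <= i.+1 -> j <= q <= j + l - 1 ->
           Dtgt a D (p, q) = ((p, q) \in [:: (i.+1, j); (i, j + l - 1); (i.+1, j + l - 1)])) &
        exists P Q, [/\ phi_tgt a (i, j) = Some P,
                        phi_tgt a (i.+1, j + l - 1) = Some Q &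
                        D' = (D `|` [fset P]) `\ Q]].

Definition vertical_chute (D D' : {fset pos}) : Prop :=
  exists (b : VS) (i j l : nat),
    [/\ 2 <= l, i + l - 1 < rows_src b, j.+1 < cols_src b,
        (forall p q, i <= p <= i + l - 1 -> j <= q <= j.+1 ->
           Dsrc b D (p, q) = ((p, q) \in [:: (i + l - 1, j); (i, j.+1); (i + l - 1, j.+1)])) &
        exists P Q, [/\ phi_src b (i, j) = Some P,
                        phi_src b (i + l - 1, j.+1) = Some Q &
                        D' = (D `|` [fset P]) `\ Q]].

Definition chute_move (D D' : {fset pos}) : Prop :=
  horizontal_chute D D' \/ vertical_chute D D'.

Definition inverse_chute_move (D D' : {fset pos}) : Prop := chute_move D' D.

Definition ltT (P Q : pos) : bool :=
  let: (i, j, k) := P in let: (i', j', k') := Q in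
  [|| (k < k')%N, (k == k') && (i < i') | [&& k == k', i == i' & j < j'] ].
Definition leT (P Q : pos) : bool := (P == Q) || ltT P Q.

(* C <_T C' : with C = {P_1 <_T .. <_T P_N}, C' = {P'_1 <_T .. <_T P'_N},
   there is t with P_t <_T P'_t and P_s = P'_s for all s > t *)
Definition ltT_map (C C' : {fset pos}) : Prop :=
  let s := sort leT C in let s' := sort leT C' in
  exists (t : nat) (x y : pos) (rest : seq pos),
    [/\ ltT x y, drop t s = x :: rest & drop t s' = y :: rest].

End Quiver.

From HB Require Import structures.
From mathcomp Require Import all_boot all_order.
From mathcomp Require Import finmap.
From mathcomp Require Import zify.
Set Implicit Arguments. Unset Strict Implicit. Unset Printing Implicit Defensive.
Local Open Scope fset_scope.
Local Open Scope nat_scope.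

(* A horizontal chute move on the rectangle [i, i+1] x [j, e] of A_alpha adds
   its top-left corner P and removes its bottom-right corner Q, while the two
   other corners stay. A diagonal chain through P, in A_alpha or in the matrix
   A_beta of the source of P, can be rerouted through one of these corners, so
   no longer chain appears; inverse moves are symmetric, and vertical moves
   are horizontal moves of the opposite quiver. Maximality is transported the
   same way: an entry that could be added after the move gives, by an inverse
   move (split at the column of that entry if it lies inside the rectangle),
   an entry that could be added before it. Finally P <_T Q, so the sorted
   sequences of the two maps agree beyond the position of Q, where the old
   one has Q and the new one a smaller entry. *)

Definition grid_lt (x y : nat * nat) : bool := (x.1 < y.1) && (x.2 < y.2).

Lemma grid_lt_trans : transitive grid_lt.
Proof. by move=> y x z /andP[? ?] /andP[? ?]; apply/andP; split; lia. Qed.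

Lemma grid_lt_irr : irreflexive grid_lt.
Proof. by move=> x; rewrite /grid_lt ltnn. Qed.

Lemma has_diag_chainP (S : pred (nat * nat)) n :
  has_diag_chain S n <-> exists c, [/\ size c = n, all S c & pairwise grid_lt c].
Proof.
by split=> -[c [? ? hc]]; exists c; rewrite (sorted_pairwise grid_lt_trans) in hc *.
Qed.

Lemma has_diag_chainW (S S' : pred (nat * nat)) n :
  (forall z, S z -> S' z) -> has_diag_chain S n -> has_diag_chain S' n.
Proof.
move=> hSS' /has_diag_chainP [c [? hS ?]]; apply/has_diag_chainP; exists c.
by split=> //; apply: sub_all hS.
Qed.

Lemma has_diag_chain_replace (S S' : pred (nat * nat)) x n :
  (forall z, S' z -> z != x -> S z) ->
  (forall c1 c2, pairwise grid_lt (c1 ++ x :: c2) -> all S' (c1 ++ x :: c2) ->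
     exists2 y, S y & all (grid_lt^~ y) c1 && all (grid_lt y) c2) ->
  has_diag_chain S' n -> has_diag_chain S n.
Proof.
move=> hS'S hy /has_diag_chainP [c [hn hS' hc]]; apply/has_diag_chainP.
have [xc | xc] := boolP (x \in c); last first.
  exists c; split=> //; apply/allP => z zc.
  by apply: hS'S; [exact: (allP hS') | apply: contraNneq xc => <-].
case/splitPr: xc hn hS' hc => c1 c2 hn hS' hc.
have [y Sy /andP[lt1 lt2]] := hy c1 c2 hc hS'.
move: hc; rewrite pairwise_cat /= => /and3P[/allrelP hx c12 /andP[x2 c2']].
have S_other z : (z \in c1) || (z \in c2) -> S z.
  move=> zc; apply: hS'S.
    by apply: (allP hS'); rewrite mem_cat inE; case/orP: zc => ->; rewrite ?orbT.
  apply/eqP => ezx; subst z.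
  by case/orP: zc => [/hx/(_ (mem_head _ _)) | /(allP x2)]; rewrite grid_lt_irr.
exists (c1 ++ y :: c2); split.
- by rewrite -hn !size_cat.
- by apply/allP => z; rewrite mem_cat inE orbCA => /predU1P [-> // | /S_other].
- rewrite pairwise_cat /= c12 lt2 c2' !andbT; apply/allrelP => z w hz.
  rewrite inE => /predU1P [-> | hw]; first exact: (allP lt1).
  by apply: grid_lt_trans (allP lt1 z hz) (allP lt2 w hw).
Qed.

Lemma has_diag_chain_exchange_down (S S' : pred (nat * nat)) p q n :
  (forall z, S' z -> z != (p, q) -> S z) -> S (p.+1, q) ->
  (forall w, q < w -> S' (p.+1, w) -> exists2 v, q <= v < w & S (p, v)) ->
  has_diag_chain S' n -> has_diag_chain S n.
Proof.
move=> hS'S below right; apply: has_diag_chain_replace hS'S _ => c1 c2.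
rewrite pairwise_cat all_cat /= => /and3P[/allrelP c1x _ /andP[xc2 c2']] /and3P[_ _ S'c2].
have before y : p <= y.1 -> q <= y.2 -> all (grid_lt^~ y) c1.
  move=> hy1 hy2; apply/allP => z /c1x /(_ (mem_head _ _)); rewrite /grid_lt /=; lia.
clear c1x; case: c2 xc2 c2' S'c2 => [|[s1 s2] c2] /=; first by exists (p.+1, q); rewrite ?before.
move=> /andP[xs _] /andP[sc2 _] /andP[S's _].
have after y : grid_lt y (s1, s2) -> grid_lt y (s1, s2) && all (grid_lt y) c2.
  by move=> ys; rewrite ys; apply/allP => z /(allP sc2); apply: grid_lt_trans.
move: xs; rewrite /grid_lt /= => /andP[ps qs].
have [ps1 | ps1] := eqVneq s1 p.+1.
  subst s1; have [v /andP[qv vs] Sv] := right _ qs S's.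
  by exists (p, v); rewrite // before // after // /grid_lt /=; lia.
by exists (p.+1, q); rewrite // before // after // /grid_lt /=; lia.
Qed.

Lemma has_diag_chain_exchange_up (S S' : pred (nat * nat)) p q n :
  (forall z, S' z -> z != (p.+1, q) -> S z) -> S (p, q) ->
  (forall u, u < q -> S' (p, u) -> exists2 v, u < v <= q & S (p.+1, v)) ->
  has_diag_chain S' n -> has_diag_chain S n.
Proof.
move=> hS'S above left; apply: has_diag_chain_replace hS'S _ => c1 c2.
rewrite pairwise_cat all_cat /= => /and3P[/allrelP c1x c1' /andP[xc2 _]] /and3P[S'c1 _ _].
have after y : y.1 <= p.+1 -> y.2 <= q -> all (grid_lt y) c2.
  move=> hy1 hy2; apply/allP => z /(allP xc2); rewrite /grid_lt /=; lia.
have {c1x} c1x : all (grid_lt^~ (p.+1, q)) c1.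
  by apply/allP => z hz; apply: c1x; rewrite ?inE ?eqxx.
case/lastP: c1 c1x c1' S'c1 => [|c1 [s1 s2]]; first by exists (p, q); rewrite ?after.
rewrite pairwise_rcons !all_rcons => /andP[xs _] /andP[c1s _] /andP[S's _].
have before y : grid_lt (s1, s2) y -> grid_lt (s1, s2) y && all (grid_lt^~ y) c1.
  by move=> sy; rewrite sy; apply/allP => z /(allP c1s) /grid_lt_trans; apply.
move: xs; rewrite /grid_lt /= => /andP[sp sq].
have [ps1 | ps1] := eqVneq s1 p.
  subst s1; have [v /andP[sv vq] Sv] := left _ sq S's.
  by exists (p.+1, v); rewrite // all_rcons before ?after // /grid_lt /=; lia.
by exists (p, q); rewrite // all_rcons before ?after // /grid_lt /=; lia.
Qed.

Lemma has_diag_chain_swap (S : pred (nat * nat)) n :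
  has_diag_chain S n -> has_diag_chain (fun z => S (z.2, z.1)) n.
Proof.
case/has_diag_chainP=> c [hn hS hc]; apply/has_diag_chainP; exists [seq (z.2, z.1) | z <- c].
rewrite size_map all_map pairwise_map; split=> //.
  by apply: sub_all hS => -[].
by apply: sub_pairwise hc => x y /andP[? ?]; apply/andP.
Qed.

Lemma leq_sum_sub I (s : seq I) (P P' : pred I) (F : I -> nat) :
  (forall i, P i -> P' i) -> \sum_(i <- s | P i) F i <= \sum_(i <- s | P' i) F i.
Proof. by move=> PP'; apply: (sub_le_big (le := leq)) => // x y; apply: leq_addr. Qed.

Section Blocks.
Variables (VS VT : finType) (r : nat) (src : 'I_r -> VS) (tgt : 'I_r -> VT)
          (mS : VS -> nat) (mT : VT -> nat).

Local Notation offT := (off_tgt src tgt mS).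
Local Notation phT := (phi_tgt src tgt mS).
Local Notation DT := (Dtgt src tgt mS mT).

Lemma off_tgt_lt k k' : tgt k = tgt k' -> k < k' -> offT k + mS (src k) <= offT k'.
Proof.
move=> e lt; rewrite [offT k']/off_tgt (bigD1 k) /=; last by rewrite lt e eqxx.
rewrite addnC leq_add2l /off_tgt.
apply: leq_sum_sub => k'' /andP[lt'' /eqP e''].
by rewrite (ltn_trans lt'' lt) e'' e eqxx neq_ltn lt''.
Qed.

Lemma off_tgt_cols k : offT k + mS (src k) <= cols_tgt src tgt mS (tgt k).
Proof.
rewrite /cols_tgt (bigD1 k) //= addnC leq_add2l.
by apply: leq_sum_sub => k' /andP[lt ->]; rewrite neq_ltn lt.
Qed.

Lemma block_tgt_le k k' q q' : tgt k = tgt k' ->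
  offT k <= q -> q' < offT k' + mS (src k') -> q <= q' -> k <= k'.
Proof.
move=> e hq hq' qq'; rewrite leqNgt; apply/negP => lt.
have := off_tgt_lt (esym e) lt; lia.
Qed.

Lemma phi_tgt_block k p q : offT k <= q < offT k + mS (src k) ->
  phT (tgt k) (p, q) = Some (p, q - offT k, k).
Proof.
move=> /andP[lo hi]; rewrite /phi_tgt; case: pickP => [k' /and3P[/eqP e lo' hi'] | /(_ k)].
  suff -> : k' = k by [].
  by apply/val_inj/eqP; rewrite eqn_leq !(block_tgt_le (q := q) (q' := q)) ?e.
by rewrite eqxx lo hi.
Qed.

Lemma phi_tgt_Some a p q N : phT a (p, q) = Some N ->
  exists k, [/\ tgt k = a, offT k <= q < offT k + mS (src k) & N = (p, q - offT k, k)].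
Proof. by rewrite /phi_tgt; case: pickP => // k /andP[/eqP <- hq] [<-]; exists k. Qed.

Lemma phi_tgt_inj a a' z z' N : phT a z = Some N -> phT a' z' = Some N -> a = a' /\ z = z'.
Proof.
case: z z' => p q [p' q'] /phi_tgt_Some [k [<- hq ->]] /phi_tgt_Some [k' [<- hq' [<- e ek]]].
by subst k'; split=> //; congr pair; lia.
Qed.

Lemma phi_tgt_row a p p' q N : phT a (p, q) = Some N -> phT a (p', q) = Some (p', N.1.2, N.2).
Proof. by rewrite /phi_tgt; case: pickP => // k _ [<-]. Qed.

Lemma Dtgt_cell a D z N : phT a z = Some N -> z.1 < mT a -> DT a D z = (N \in D).
Proof.
case: z => p q hN hp; rewrite /Dtgt hN /= /rows_tgt hp /=.
have [k [<- /andP[_ hq] _]] := phi_tgt_Some hN.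
by rewrite (leq_trans hq (off_tgt_cols k)).
Qed.

Lemma Dtgt_block k D p c : p < mT (tgt k) -> c < mS (src k) ->
  DT (tgt k) D (p, offT k + c) = ((p, c, k) \in D).
Proof.
move=> hp hc; rewrite (Dtgt_cell _ (phi_tgt_block _ _)) ?addKn //; lia.
Qed.

Lemma Dtgt_fsetU a D E z : DT a (D `|` E) z = DT a D z || DT a E z.
Proof.
by rewrite /Dtgt; case: phT => [N|] /=; rewrite ?andbF // in_fsetU; do 2!case: (_ < _).
Qed.

Lemma Dtgt_fset1 a N x z : phT a x = Some N -> x.1 < mT a -> DT a [fset N] z = (z == x).
Proof.
move=> hN hx; have [-> | nzx] := eqVneq z x; first by rewrite (Dtgt_cell _ hN) // inE eqxx.
rewrite /Dtgt; case hz: phT => [Z|] /=; rewrite ?andbF // inE.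
suff /negbTE -> : Z != N by rewrite !andbF.
by apply: contra_neq nzx => eZ; subst Z; case: (phi_tgt_inj hz hN).
Qed.

Lemma Dtgt_fset1P a N z : DT a [fset N] z -> phT a z = Some N.
Proof.
rewrite /Dtgt; case: phT => [Z|] /=; last by rewrite !andbF.
by case/and3P=> _ _; rewrite -[_ \in _]/(Z \in [fset N]) inE => /eqP ->.
Qed.

Lemma Dtgt_fsetD1 a D N x z : phT a x = Some N -> DT a (D `\ N) z = DT a D z && (z != x).
Proof.
move=> hN; rewrite /Dtgt; case hz: phT => [Z|] /=; rewrite ?andbF // inE.
have [ezx | nzx] := eqVneq z x.
  by move: hz; rewrite ezx hN => -[->]; rewrite in_fset1 eqxx !andbF.
have [eZ | nZ] := eqVneq Z N; last by rewrite in_fset1 nZ andbT.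
by subst Z; case: (phi_tgt_inj hz hN) => _ ezx; rewrite ezx eqxx in nzx.
Qed.

Lemma Dtgt_sub a D E z : D `<=` E -> DT a D z -> DT a E z.
Proof. by move=> /fsubsetP DE; rewrite /Dtgt; case: phT => [Z|] //= /and3P[-> -> /DE]. Qed.

Lemma Dtgt_exchange a X Y N z : Y `<=` N |` X -> DT a Y z -> phT a z != Some N -> DT a X z.
Proof.
move=> /fsubsetP YX; rewrite /Dtgt; case: phT => [Z|] //= /and3P[-> -> /YX].
by rewrite !inE => /predU1P [-> /eqP | ->].
Qed.

End Blocks.

Section Transpose.
Variable r : nat.

Definition swap_pos (X : pos r) : pos r := (X.1.2, X.1.1, X.2).

Definition swap_fset (D : {fset pos r}) : {fset pos r} := swap_pos @` D.

Lemma swap_posK : involutive swap_pos.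
Proof. by case=> [[i j] k]. Qed.

Lemma swap_pos_inj : injective swap_pos.
Proof. exact: can_inj swap_posK. Qed.

Lemma mem_swap_fset D X : (X \in swap_fset D) = (swap_pos X \in D).
Proof. by rewrite -{1}(swap_posK X) mem_imfset //; apply: swap_pos_inj. Qed.

Lemma swap_fsetK : involutive swap_fset.
Proof. by move=> D; apply/fsetP => X; rewrite !mem_swap_fset swap_posK. Qed.

Variables (VS VT : finType) (src : 'I_r -> VS) (tgt : 'I_r -> VT)
          (mS : VS -> nat) (mT : VT -> nat).

Local Notation offS := (off_src src tgt mT).
Local Notation phS := (phi_src src tgt mT).
Local Notation DS := (Dsrc src tgt mS mT).

(* The source side of a quiver is the target side of the opposite quiver,
   with every matrix transposed. *)
Lemma phi_src_swap b p q : phS b (p, q) = omap swap_pos (phi_tgt tgt src mT b (q, p)).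
Proof. by rewrite /phi_tgt /phi_src; case: pickP. Qed.

Lemma Dsrc_swap b D p q : DS b D (p, q) = Dtgt tgt src mT mS b (swap_fset D) (q, p).
Proof.
rewrite /Dsrc /Dtgt phi_src_swap; case: phi_tgt => [X|] /=; last by rewrite !andbF.
by rewrite mem_swap_fset andbCA.
Qed.

Lemma phi_src_swapP b p q N :
  phS b (p, q) = Some N -> phi_tgt tgt src mT b (q, p) = Some (swap_pos N).
Proof. by rewrite phi_src_swap; case: phi_tgt => //= X [<-]; rewrite swap_posK. Qed.

Lemma phi_src_Some b p q N : phS b (p, q) = Some N ->
  exists k, [/\ src k = b, offS k <= p < offS k + mT (tgt k) & N = (p - offS k, q, k)].
Proof.
move=> /phi_src_swapP /phi_tgt_Some [k [? ? eN]]; exists k; split=> //.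
by rewrite -[N]swap_posK eN.
Qed.

Lemma phi_src_inj b b' z z' N : phS b z = Some N -> phS b' z' = Some N -> b = b' /\ z = z'.
Proof.
case: z z' => p q [p' q'] /phi_src_swapP h /phi_src_swapP h'.
by have [-> [-> ->]] := phi_tgt_inj h h'.
Qed.

Lemma phi_src_block k p q : offS k <= p < offS k + mT (tgt k) ->
  phS (src k) (p, q) = Some (p - offS k, q, k).
Proof. by move=> hp; rewrite phi_src_swap (phi_tgt_block (src := tgt)). Qed.

Lemma Dsrc_block k D p c : p < mT (tgt k) -> c < mS (src k) ->
  DS (src k) D (offS k + p, c) = ((p, c, k) \in D).
Proof. by move=> hp hc; rewrite Dsrc_swap Dtgt_block // mem_swap_fset. Qed.

Lemma Dsrc_Dtgt k D p c : p < mT (tgt k) -> c < mS (src k) ->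
  DS (src k) D (offS k + p, c) = Dtgt src tgt mS mT (tgt k) D (p, off_tgt src tgt mS k + c).
Proof. by move=> hp hc; rewrite Dsrc_block ?Dtgt_block. Qed.

Lemma Dsrc_cell b D z N : phS b z = Some N -> z.2 < mS b -> DS b D z = (N \in D).
Proof.
case: z => p q hN hq.
by rewrite Dsrc_swap (Dtgt_cell _ (phi_src_swapP hN)) // mem_swap_fset swap_posK.
Qed.

Lemma block_src_le k k' p p' : src k = src k' ->
  offS k <= p -> p' < offS k' + mT (tgt k') -> p <= p' -> k <= k'.
Proof. exact: (block_tgt_le (src := tgt) (tgt := src)). Qed.

Lemma Dsrc_sub b D E z : D `<=` E -> DS b D z -> DS b E z.
Proof. by move=> /fsubsetP DE; rewrite /Dsrc; case: phS => [Z|] //= /and3P[-> -> /DE]. Qed.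

Lemma Dsrc_exchange b X Y N z : Y `<=` N |` X -> DS b Y z -> phS b z != Some N -> DS b X z.
Proof.
move=> /fsubsetP YX; rewrite /Dsrc; case: phS => [Z|] //= /and3P[-> -> /YX].
by rewrite !inE => /predU1P [-> /eqP | ->].
Qed.

End Transpose.

Section Compatibility.
Variables (VS VT : finType) (r : nat) (src : 'I_r -> VS) (tgt : 'I_r -> VT)
          (mS : VS -> nat) (mT : VT -> nat) (uS : VS -> nat) (uT : VT -> nat).

Local Notation offT := (off_tgt src tgt mS).
Local Notation offS := (off_src src tgt mT).
Local Notation phT := (phi_tgt src tgt mS).
Local Notation phS := (phi_src src tgt mT).
Local Notation DT := (Dtgt src tgt mS mT).
Local Notation DS := (Dsrc src tgt mS mT).
Local Notation comp := (u_compatible src tgt mS mT uS uT).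
Local Notation cvm := (concurrent_vertex_map src tgt mS mT uS uT).

Lemma u_compatible_sub D E : comp D -> E `<=` D -> comp E.
Proof.
case=> hL hT hS ED; split.
- by move=> X /(fsubsetP ED) /hL.
- by move=> a /(has_diag_chainW (fun _ => Dtgt_sub ED)) /hT.
- by move=> b /(has_diag_chainW (fun _ => Dsrc_sub ED)) /hS.
Qed.

Lemma concurrent_vertex_mapP C :
  cvm C <-> comp C /\ (forall R, R \notin C -> ~ comp (R |` C)).
Proof.
split=> -[hC hmax]; split=> //.
  by move=> R hR /hmax /(_ (fsubsetU1 R C)) eC; move: hR; rewrite -eC fsetU11.
move=> D hD CD; apply/eqP; rewrite eqEfsubset CD andbT; apply/fsubsetP => X hX.
apply/negPn/negP => hXC; apply: (hmax X hXC); apply: u_compatible_sub hD _.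
by apply/fsubsetP => Y; rewrite !inE => /predU1P [-> // | /(fsubsetP CD)].
Qed.

(* Adding an entry [N] can only create chains in the two matrices [A_gamma]
   containing [N]. *)
Lemma u_compatible_exchange X Y N : comp X -> Y `<=` N |` X -> inL src tgt mS mT N ->
  (forall n, has_diag_chain (DT (tgt N.2) Y) n -> has_diag_chain (DT (tgt N.2) X) n) ->
  (forall n, has_diag_chain (DS (src N.2) Y) n -> has_diag_chain (DS (src N.2) X) n) ->
  comp Y.
Proof.
case=> hL hT hS YX hN chT chS; split.
- by move=> Z /(fsubsetP YX); rewrite !inE => /predU1P [-> | /hL].
- move=> a; have [<- | na] := eqVneq (tgt N.2) a; first by move/chT/hT.
  move=> hc; apply: (hT a); apply: has_diag_chainW hc => -[p q] /(Dtgt_exchange YX); apply.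
  by apply: contra_neq na => /phi_tgt_Some [k [<- _ ->]].
- move=> b; have [<- | nb] := eqVneq (src N.2) b; first by move/chS/hS.
  move=> hc; apply: (hS b); apply: has_diag_chainW hc => -[p q] /(Dsrc_exchange YX); apply.
  by apply: contra_neq nb => /phi_src_Some [k [<- _ ->]].
Qed.

(* A chain through [N] is rerouted through [(i+1, j)], or through [(i, e)] when
   it continues in row [i+1]; in the source matrix of [N] the same happens
   inside the block of [N]. *)
Lemma u_compatible_add_top_left X Y a i j e N :
  phT a (i, j) = Some N -> j <= e -> DT a X (i.+1, j) -> DT a X (i, e) ->
  (forall w, j < w <= e -> ~~ DT a Y (i.+1, w)) ->
  Y `<=` N |` X -> comp X -> comp Y.
Proof.
move=> hN je below right empty YX hX.
have [k [ek /andP[jlo jhi] eN]] := phi_tgt_Some hN; subst a N.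
have hi : i.+1 < mT (tgt k) by case/and3P: below.
have beyond w : j < w -> DT (tgt k) Y (i.+1, w) -> e < w.
  by move=> jw hw; rewrite ltnNge; apply: contraL hw => we; apply: empty; rewrite jw.
apply: (u_compatible_exchange hX YX) => /=; first by rewrite /inL /=; lia.
  move=> n; apply: (has_diag_chain_exchange_down _ below) => [z hz nz | w jw hw].
    by apply: Dtgt_exchange YX hz _; apply: contra_neq nz => /phi_tgt_inj/(_ hN) [].
  by exists e; rewrite ?je ?beyond.
have hPS : phS (src k) (offS k + i, j - offT k) = Some (i, j - offT k, k).
  by rewrite phi_src_block ?addKn //; lia.
move=> n; apply: (has_diag_chain_exchange_down (p := offS k + i) (q := j - offT k)).
- by move=> z hz nz; apply: Dsrc_exchange YX hz _; apply: contra_neq nz => /phi_src_inj/(_ hPS) [].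
- by rewrite -addnS Dsrc_Dtgt ?subnKC //; lia.
- move=> w jw; rewrite -addnS => hw; have wS : w < mS (src k) by case/and3P: hw.
  rewrite Dsrc_Dtgt // in hw; have /beyond/(_ hw) ew : j < offT k + w by lia.
  by exists (e - offT k); [lia | rewrite Dsrc_Dtgt ?subnKC //; lia].
Qed.

(* A chain through [N] is rerouted through [(i, e)], or through [(i+1, j)] when
   it comes from row [i]. *)
Lemma u_compatible_add_bottom_right X Y a i j e N :
  phT a (i.+1, e) = Some N -> j <= e -> DT a X (i, e) -> DT a X (i.+1, j) ->
  (forall w, j <= w < e -> ~~ DT a Y (i, w)) ->
  Y `<=` N |` X -> comp X -> comp Y.
Proof.
move=> hN je above left empty YX hX.
have [k [ek /andP[elo ehi] eN]] := phi_tgt_Some hN; subst a N.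
have hi : i.+1 < mT (tgt k) by case/and3P: left.
have before w : w < e -> DT (tgt k) Y (i, w) -> w < j.
  by move=> we hw; rewrite ltnNge; apply: contraL hw => jw; apply: empty; rewrite jw.
apply: (u_compatible_exchange hX YX) => /=; first by rewrite /inL /=; lia.
  move=> n; apply: (has_diag_chain_exchange_up _ above) => [z hz nz | u ue hu].
    by apply: Dtgt_exchange YX hz _; apply: contra_neq nz => /phi_tgt_inj/(_ hN) [].
  by exists j; rewrite ?je ?before.
have hQS : phS (src k) ((offS k + i).+1, e - offT k) = Some (i.+1, e - offT k, k).
  by rewrite phi_src_block -addnS ?addKn //; lia.
move=> n; apply: (has_diag_chain_exchange_up (p := offS k + i) (q := e - offT k)).
- by move=> z hz nz; apply: Dsrc_exchange YX hz _; apply: contra_neq nz => /phi_src_inj/(_ hQS) [].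
- by rewrite Dsrc_Dtgt ?subnKC //; lia.
- move=> u ue hu; have um : u < mS (src k) by lia.
  rewrite Dsrc_Dtgt ?(ltnW hi) // in hu; have /before/(_ hu) uj : offT k + u < e by lia.
  by exists (j - offT k); [lia | rewrite -addnS Dsrc_Dtgt ?subnKC //; lia].
Qed.

End Compatibility.

Section SortExchange.
Variables (T : eqType) (lt le : rel T).
Hypotheses (lt_trans : transitive lt) (lt_irr : irreflexive lt)
  (lt_total : forall x y, x != y -> lt x y || lt y x)
  (leE : forall x y, le x y = (x == y) || lt x y).

Lemma lt_asym x y : lt x y -> lt y x = false.
Proof. by move=> xy; apply/negbTE/negP => /(lt_trans xy); rewrite lt_irr. Qed.

Lemma reflc_total : total le.
Proof. by move=> x y; rewrite !leE; case: eqVneq => [-> | /lt_total]; rewrite ?eqxx ?orbT. Qed.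

Lemma reflc_trans : transitive le.
Proof.
move=> y x z; rewrite !leE => /predU1P [-> // | xy] /predU1P [<- | yz]; rewrite ?xy ?orbT //.
by rewrite (lt_trans xy yz) orbT.
Qed.

Lemma reflc_anti : antisymmetric le.
Proof.
move=> x y; rewrite !leE eq_sym => /andP[/predU1P [// | xy] /predU1P [// | yx]].
by rewrite lt_asym in yx.
Qed.

Lemma sort_perm_eq s1 s2 : perm_eq s1 s2 -> sort le s1 = sort le s2.
Proof. by move/(perm_sortP reflc_total reflc_trans reflc_anti). Qed.

Lemma sort_cat_allrel s1 s2 :
  allrel le s1 s2 -> sort le (s1 ++ s2) = sort le s1 ++ sort le s2.
Proof.
move=> s12; apply: (sorted_eq reflc_trans reflc_anti); first exact: (sort_sorted reflc_total).
  rewrite (sorted_pairwise reflc_trans) pairwise_cat -!(sorted_pairwise reflc_trans).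
  rewrite !(sort_sorted reflc_total) !andbT; apply/allrelP => x y.
  by rewrite !mem_sort; apply/allrelP.
by rewrite perm_sort perm_sym perm_cat ?perm_sort.
Qed.

Lemma sort_exchange s x y : y \notin s -> lt x y ->
  exists t u rest, [/\ lt u y, drop t (sort le (x :: s)) = u :: rest
                             & drop t (sort le (y :: s)) = y :: rest].
Proof.
move=> ys xy; set lo := [seq z <- s | lt z y]; set hi := [seq z <- s | lt y z].
have s_lohi : perm_eq s (lo ++ hi).
  suff <- : [seq z <- s | predC (lt^~ y) z] = hi by rewrite perm_sym perm_filterC.
  apply: eq_in_filter => z zs /=; have /lt_total : z != y by apply: contraNneq ys => <-.
  by case/orP=> [zy | yz]; rewrite ?zy ?(lt_asym zy) ?yz ?(lt_asym yz).
have lo_hi z w : z \in y :: lo -> w \in hi -> le z w.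
  rewrite inE !mem_filter leE => /predU1P [-> /andP[-> _] | /andP[zy _] /andP[yw _]].
    by rewrite orbT.
  by rewrite (lt_trans zy yw) orbT.
have Ey : sort le (y :: s) = sort le lo ++ y :: sort le hi.
  rewrite (@sort_perm_eq _ (lo ++ [:: y] ++ hi)); last first.
    by rewrite perm_sym (perm_catCA lo [:: y] hi) /= perm_cons perm_sym.
  rewrite sort_cat_allrel ?sort_cat_allrel //; apply/allrelP => z w.
    by rewrite inE => /eqP ->; apply: lo_hi; rewrite inE eqxx.
  rewrite mem_cat inE => zlo /orP [/eqP -> | /lo_hi -> //]; last by rewrite inE zlo orbT.
  by move: zlo; rewrite mem_filter leE => /andP[-> _]; rewrite orbT.
have Ex : sort le (x :: s) = sort le (x :: lo) ++ sort le hi.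
  rewrite -sort_cat_allrel; last first.
    apply/allrelP => z w; rewrite inE => /predU1P [-> | zlo] whi.
      by apply: reflc_trans (lo_hi _ _ (mem_head _ _) whi); rewrite leE xy orbT.
    by apply: lo_hi whi; rewrite inE zlo orbT.
  by apply: sort_perm_eq; rewrite /= perm_cons.
have := size_sort le (x :: lo).
case/lastP: (sort le (x :: lo)) Ex (mem_sort le (x :: lo)) => // l u Ex mem_u.
rewrite size_rcons => -[size_l]; exists (size (sort le lo)), u, (sort le hi); split.
- have : u \in x :: lo by rewrite -mem_u mem_rcons mem_head.
  by rewrite inE mem_filter => /predU1P [-> | /andP[]].
- by rewrite Ex -cats1 -catA drop_size_cat // size_sort.
- by rewrite Ey drop_size_cat.
Qed.

End SortExchange.

Section TOrder.
Variable r : nat.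

Lemma ltTE (x y : pos r) : ltT x y =
  [|| x.2 < y.2, (x.2 == y.2 :> nat) && (x.1.1 < y.1.1)
    | [&& x.2 == y.2 :> nat, x.1.1 == y.1.1 & x.1.2 < y.1.2]].
Proof. by case: x => [[i j] k]; case: y => [[i' j'] k']. Qed.

Lemma ltT_trans : transitive (@ltT r).
Proof. by move=> y x z; rewrite !ltTE; lia. Qed.

Lemma ltT_irr : irreflexive (@ltT r).
Proof. by move=> x; rewrite ltTE; lia. Qed.

Lemma ltT_total (x y : pos r) : x != y -> ltT x y || ltT y x.
Proof.
case: x y => [[i j] k] [[i' j'] k'] ne; rewrite !ltTE /=.
have : [|| i != i', j != j' | k != k' :> nat].
  by apply: contraR ne; rewrite !negb_or !negbK => /and3P[/eqP -> /eqP -> /eqP /val_inj ->].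
lia.
Qed.

Lemma ltT_map_exchange (D : {fset pos r}) P Q : P \notin D -> Q \in D -> ltT P Q ->
  ltT_map ((D `|` [fset P]) `\ Q) D.
Proof.
move=> PD QD PQ; set s := (D `\ Q : seq (pos r)).
have sortE (A : {fset pos r}) X :
    perm_eq A (X :: s) -> sort (@leT r) A = sort (@leT r) (X :: s).
  exact: (sort_perm_eq ltT_trans ltT_irr ltT_total).
rewrite /ltT_map (sortE D Q) ?(sortE _ P); last first.
- apply: uniq_perm; rewrite /= ?fset_uniq ?andbT ?inE ?eqxx //= => X.
  by rewrite !inE; case: eqVneq => // ->.
- apply: uniq_perm; rewrite /= ?fset_uniq ?andbT ?inE ?(negbTE PD) ?andbF //= => X.
  rewrite !inE; case: (eqVneq X P) => [-> | _]; rewrite ?orbT ?orbF ?andbT // orTb.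
  by apply/eqP => ePQ; rewrite ePQ QD in PD.
have Qs : Q \notin s by rewrite !inE eqxx.
have [t [u [rest [uQ eP eQ]]]] :=
  sort_exchange ltT_trans ltT_irr ltT_total (fun _ _ => erefl) Qs PQ.
by exists t, u, Q, rest.
Qed.

End TOrder.

Section HorizontalChute.
Variables (VS VT : finType) (r : nat) (src : 'I_r -> VS) (tgt : 'I_r -> VT)
          (mS : VS -> nat) (mT : VT -> nat) (uS : VS -> nat) (uT : VT -> nat).

Local Notation phT := (phi_tgt src tgt mS).
Local Notation DT := (Dtgt src tgt mS mT).
Local Notation comp := (u_compatible src tgt mS mT uS uT).
Local Notation cvm := (concurrent_vertex_map src tgt mS mT uS uT).

Variables (a : VT) (i j e : nat) (P Q : pos r) (D : {fset pos r}).
Hypotheses (je : j < e) (hi : i.+1 < mT a)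
  (hP : phT a (i, j) = Some P) (hQ : phT a (i.+1, e) = Some Q)
  (hD : forall p q, i <= p <= i.+1 -> j <= q <= e ->
          DT a D (p, q) = ((p, q) \in [:: (i.+1, j); (i, e); (i.+1, e)])).

Local Notation D' := ((D `|` [fset P]) `\ Q).

Lemma Dtgt_hchute p q : i <= p <= i.+1 -> j <= q <= e ->
  DT a D' (p, q) = ((p, q) \in [:: (i, j); (i.+1, j); (i, e)]).
Proof.
move=> hp hq; rewrite (Dtgt_fsetD1 _ _ _ hQ) Dtgt_fsetU (Dtgt_fset1 _ hP) ?hD //=; last lia.
by rewrite !inE !xpair_eqE; lia.
Qed.

Lemma hchute_notin : P \notin D.
Proof. by rewrite -(Dtgt_cell (mT := mT) D hP) ?hD ?inE ?xpair_eqE //=; lia. Qed.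

Lemma hchute_in : Q \in D.
Proof. by rewrite -(Dtgt_cell (mT := mT) D hQ) ?hD ?inE ?xpair_eqE //=; lia. Qed.

Lemma hchute_new : P \in D'.
Proof.
rewrite !inE eqxx orbT andbT; apply: contraNneq hchute_notin => ->; exact: hchute_in.
Qed.

Ltac fsubset_bool := apply/fsubsetP => ?; rewrite !inE; by do ?[case: (_ == _) | case: (_ \in _)].

Lemma u_compatible_hchute : comp D -> comp D'.
Proof.
apply: (u_compatible_add_top_left hP (ltnW je)).
all: rewrite ?hD ?inE ?xpair_eqE //=; try lia.
  by move=> w jw; rewrite Dtgt_hchute ?inE ?xpair_eqE //=; lia.
fsubset_bool.
Qed.

Lemma u_compatible_hchute_inv : comp D' -> comp D.
Proof.
apply: (u_compatible_add_bottom_right hQ (ltnW je)).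
all: rewrite ?Dtgt_hchute ?inE ?xpair_eqE //=; try lia.
  by move=> w jw; rewrite hD ?inE ?xpair_eqE //=; lia.
fsubset_bool.
Qed.

(* [S |` D] is reached from [R |` D'] by two inverse chute moves, on the
   rectangles with columns [j, w] and [w, e]. *)
Lemma u_compatible_hchute_split_top R S w : j < w < e ->
  phT a (i, w) = Some R -> phT a (i.+1, w) = Some S -> comp (R |` D') -> comp (S |` D).
Proof.
move=> /andP[jw we] hR hS hRC.
have hF : comp (S |` (R |` (D `\ Q))).
  apply: (u_compatible_add_bottom_right hS (ltnW jw)) hRC.
  - by rewrite Dtgt_fsetU (Dtgt_fset1 _ hR) ?eqxx //=; lia.
  - by rewrite Dtgt_fsetU Dtgt_hchute ?inE ?eqxx ?orbT //; lia.
  - move=> w' hw'; rewrite !Dtgt_fsetU (Dtgt_fset1 _ hS) // (Dtgt_fset1 _ hR) /=; last lia.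
    by rewrite (Dtgt_fsetD1 _ _ _ hQ) hD ?inE ?xpair_eqE //=; lia.
  - fsubset_bool.
apply: (u_compatible_add_bottom_right hQ (ltnW we)) hF.
- by rewrite !Dtgt_fsetU (Dtgt_fsetD1 _ _ _ hQ) hD ?inE ?xpair_eqE ?orbT //=; lia.
- by rewrite Dtgt_fsetU (Dtgt_fset1 _ hS) ?eqxx.
- move=> w' hw'; rewrite Dtgt_fsetU (Dtgt_fset1 _ hS) //.
  by rewrite hD ?inE ?xpair_eqE //=; lia.
- fsubset_bool.
Qed.

(* [S |` D'] is reached from [R |` D] by two chute moves, on the rectangles
   with columns [w, e] and [j, w]. *)
Lemma u_compatible_hchute_split_bottom R S w : j < w < e ->
  phT a (i.+1, w) = Some R -> phT a (i, w) = Some S -> comp (R |` D) -> comp (S |` D').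
Proof.
move=> /andP[jw we] hR hS hRD.
have hG : comp (S |` ((R |` D) `\ Q)).
  apply: (u_compatible_add_top_left hS (ltnW we)) hRD.
  - by rewrite Dtgt_fsetU (Dtgt_fset1 _ hR) ?eqxx.
  - by rewrite Dtgt_fsetU hD ?inE ?eqxx ?orbT //=; lia.
  - move=> w' hw'; rewrite Dtgt_fsetU (Dtgt_fset1 _ hS) /=; last lia.
    rewrite (Dtgt_fsetD1 _ _ _ hQ) Dtgt_fsetU (Dtgt_fset1 _ hR) //.
    by rewrite hD ?inE ?xpair_eqE //=; lia.
  - fsubset_bool.
apply: (u_compatible_add_top_left hP (ltnW jw)) hG.
- by rewrite !Dtgt_fsetU (Dtgt_fsetD1 _ _ _ hQ) Dtgt_fsetU hD ?inE ?xpair_eqE ?orbT //=; lia.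
- by rewrite Dtgt_fsetU (Dtgt_fset1 _ hS) ?eqxx //=; lia.
- move=> w' hw'; rewrite Dtgt_fsetU (Dtgt_fset1 _ hS) /=; last lia.
  by rewrite Dtgt_hchute ?inE ?xpair_eqE //=; lia.
- fsubset_bool.
Qed.

(* If [R |` D'] were compatible, the inverse move would make [R |` D]
   compatible, unless [R] lies in row [i] strictly inside the rectangle; then
   the entry below [R] can be added to [D]. *)
Lemma concurrent_vertex_map_hchute : cvm D -> cvm D'.
Proof.
case/concurrent_vertex_mapP=> hC hmax; apply/concurrent_vertex_mapP.
split=> [|R hR hRC]; first exact: u_compatible_hchute.
have [eRQ | nRQ] := eqVneq R Q.
  subst R; apply: (hmax P hchute_notin); apply: u_compatible_sub hRC _; fsubset_bool.
have RD : R \notin D by apply: contraNN hR; rewrite !inE nRQ => ->.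
pose inside w := (j < w) && (phT a (i, w) == Some R).
case: (pickP (fun w : 'I_e => inside w)) => [w /andP[jw /eqP hR'] | outside].
  have hS := phi_tgt_row i.+1 hR'.
  apply: (hmax _ _ (u_compatible_hchute_split_top _ hR' hS hRC)); last by rewrite jw ltn_ord.
  by rewrite -(Dtgt_cell (mT := mT) D hS) ?hD ?inE ?xpair_eqE //=; have := ltn_ord w; lia.
apply: (hmax R RD); apply: (u_compatible_add_bottom_right hQ (ltnW je)) hRC.
- by rewrite Dtgt_fsetU Dtgt_hchute ?inE ?eqxx ?orbT //=; lia.
- by rewrite Dtgt_fsetU Dtgt_hchute ?inE ?eqxx ?orbT //=; lia.
- move=> w hw; rewrite Dtgt_fsetU hD ?inE ?xpair_eqE /=; try lia.
  apply/negP => /orP[/Dtgt_fset1P hR' | ]; last lia.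
  have [ejw | njw] := eqVneq w j.
    by move: hR; rewrite ejw hP in hR'; case: hR' => <-; rewrite hchute_new.
  have we : w < e by lia.
  by have := outside (Ordinal we); rewrite /inside hR' eqxx andbT /=; lia.
- fsubset_bool.
Qed.

Lemma concurrent_vertex_map_hchute_inv : cvm D' -> cvm D.
Proof.
case/concurrent_vertex_mapP=> hC hmax; apply/concurrent_vertex_mapP.
split=> [|R hR hRD]; first exact: u_compatible_hchute_inv.
have [eRP | nRP] := eqVneq R P.
  subst R; apply: (hmax Q); first by rewrite !inE eqxx.
  apply: u_compatible_sub hRD _; apply/fsubsetP => X.
  by rewrite !inE => /predU1P [-> | /andP[_ /orP[] ->]]; rewrite ?hchute_in ?orbT.
have RD' : R \notin D' by rewrite !inE (negbTE hR) (negbTE nRP) andbF.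
pose inside w := (j < w) && (phT a (i.+1, w) == Some R).
case: (pickP (fun w : 'I_e => inside w)) => [w /andP[jw /eqP hR'] | outside].
  have hS := phi_tgt_row i hR'.
  apply: (hmax _ _ (u_compatible_hchute_split_bottom _ hR' hS hRD)); last by rewrite jw ltn_ord.
  by rewrite -(Dtgt_cell (mT := mT) D' hS) ?Dtgt_hchute ?inE ?xpair_eqE //=; have := ltn_ord w; lia.
apply: (hmax R RD'); apply: (u_compatible_add_top_left hP (ltnW je)) hRD.
- by rewrite Dtgt_fsetU hD ?inE ?eqxx ?orbT //=; lia.
- by rewrite Dtgt_fsetU hD ?inE ?eqxx ?orbT //=; lia.
- move=> w hw; rewrite Dtgt_fsetU Dtgt_hchute ?inE ?xpair_eqE /=; try lia.
  apply/negP => /orP[/Dtgt_fset1P hR' | ]; last lia.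
  have [ewe | nwe] := eqVneq w e.
    by move: hR; rewrite ewe hQ in hR'; case: hR' => <-; rewrite hchute_in.
  have we : w < e by lia.
  by have := outside (Ordinal we); rewrite /inside hR' eqxx andbT /=; lia.
- fsubset_bool.
Qed.

Lemma ltT_hchute : ltT P Q.
Proof.
have [kP [ekP /andP[jlo _] ->]] := phi_tgt_Some hP.
have [kQ [ekQ /andP[_ ehi] ->]] := phi_tgt_Some hQ.
by have := block_tgt_le (etrans ekP (esym ekQ)) jlo ehi (ltnW je); rewrite ltTE /=; lia.
Qed.

Lemma hchute_invariants :
  [/\ comp D -> comp D', comp D' -> comp D, cvm D -> cvm D', cvm D' -> cvm D & ltT_map D' D].
Proof.
split; [exact: u_compatible_hchute | exact: u_compatible_hchute_inv
  | exact: concurrent_vertex_map_hchute | exact: concurrent_vertex_map_hchute_inv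
  | exact: ltT_map_exchange hchute_notin hchute_in ltT_hchute].
Qed.

End HorizontalChute.

Section SwapCompatibility.
Variables (VS VT : finType) (r : nat) (src : 'I_r -> VS) (tgt : 'I_r -> VT)
          (mS : VS -> nat) (mT : VT -> nat) (uS : VS -> nat) (uT : VT -> nat).

Lemma u_compatible_swap D : u_compatible src tgt mS mT uS uT D ->
  u_compatible tgt src mT mS uT uS (swap_fset D).
Proof.
case=> hL hT hS; split.
- by case=> [[i j] k]; rewrite mem_swap_fset => /hL; rewrite /inL /= andbC.
- move=> b /has_diag_chain_swap hc; apply: (hS b); apply: has_diag_chainW hc => -[p q] /=.
  by rewrite Dsrc_swap.
- move=> a /has_diag_chain_swap hc; apply: (hT a); apply: has_diag_chainW hc => -[p q] /=.
  by rewrite Dsrc_swap swap_fsetK.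
Qed.

End SwapCompatibility.

Section SwapMaximality.
Variables (VS VT : finType) (r : nat) (src : 'I_r -> VS) (tgt : 'I_r -> VT)
          (mS : VS -> nat) (mT : VT -> nat) (uS : VS -> nat) (uT : VT -> nat).

Local Notation comp := (u_compatible src tgt mS mT uS uT).
Local Notation cvm := (concurrent_vertex_map src tgt mS mT uS uT).
Local Notation comp' := (u_compatible tgt src mT mS uT uS).
Local Notation cvm' := (concurrent_vertex_map tgt src mT mS uT uS).

Lemma u_compatible_swapE D : comp' (swap_fset D) <-> comp D.
Proof.
by split=> [/u_compatible_swap | /u_compatible_swap //]; rewrite swap_fsetK.
Qed.

Lemma concurrent_vertex_map_swap D : cvm D -> cvm' (swap_fset D).
Proof.
case/concurrent_vertex_mapP=> hC hmax; apply/concurrent_vertex_mapP.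
split=> [|R]; first exact/u_compatible_swapE.
rewrite mem_swap_fset => hR /u_compatible_swap hRC; apply: (hmax _ hR).
apply: u_compatible_sub hRC _; apply/fsubsetP => X.
rewrite mem_swap_fset !inE -[swap_pos X \in _]/(swap_pos X \in swap_fset D).
by rewrite mem_swap_fset swap_posK (can2_eq (@swap_posK r) (@swap_posK r)).
Qed.

End SwapMaximality.

Section Chutes.
Variables (VS VT : finType) (r : nat) (src : 'I_r -> VS) (tgt : 'I_r -> VT)
          (mS : VS -> nat) (mT : VT -> nat) (uS : VS -> nat) (uT : VT -> nat).

Local Notation comp := (u_compatible src tgt mS mT uS uT).
Local Notation cvm := (concurrent_vertex_map src tgt mS mT uS uT).
Local Notation cvm' := (concurrent_vertex_map tgt src mT mS uT uS).

Lemma concurrent_vertex_map_swapE D : cvm' (swap_fset D) <-> cvm D.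
Proof.
split=> [/concurrent_vertex_map_swap | /concurrent_vertex_map_swap //].
by rewrite swap_fsetK.
Qed.

Lemma vertical_chute_swap D D' : vertical_chute src tgt mS mT D D' ->
  horizontal_chute tgt src mT mS (swap_fset D) (swap_fset D').
Proof.
case=> b [i [j [l [hl hi hj hD [P [Q [hP hQ ->]]]]]]].
exists b, j, i, l; split=> //.
  move=> p q hp hq; rewrite -Dsrc_swap hD //.
  by rewrite !inE !xpair_eqE; lia.
exists (swap_pos P), (swap_pos Q); split; try exact: phi_src_swapP.
apply/fsetP => X; rewrite !(inE, mem_swap_fset).
by rewrite !(can2_eq (@swap_posK r) (@swap_posK r)).
Qed.

Lemma ltT_map_vchute D D' : vertical_chute src tgt mS mT D D' -> ltT_map D' D.
Proof.
case=> b [i [j [l [hl hi hj hD [P [Q [hP hQ ->]]]]]]]; rewrite /cols_src in hj.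
have [kP [ekP /andP[ilo _] eP]] := phi_src_Some hP.
have [kQ [ekQ /andP[_ ihi] eQ]] := phi_src_Some hQ.
apply: ltT_map_exchange.
- by rewrite -(Dsrc_cell (mS := mS) D hP) ?hD ?inE ?xpair_eqE //=; lia.
- by rewrite -(Dsrc_cell (mS := mS) D hQ) ?hD ?inE ?xpair_eqE //=; lia.
- have := block_src_le (etrans ekP (esym ekQ)) ilo ihi.
  rewrite eP eQ ltTE /=; case: (ltngtP kP kQ) => [|| /val_inj eq]; try lia.
  by subst kQ; lia.
Qed.

Local Notation chute_invariants D D' :=
  [/\ comp D -> comp D', comp D' -> comp D, cvm D -> cvm D', cvm D' -> cvm D & ltT_map D' D].

Lemma horizontal_chute_invariants D D' :
  horizontal_chute src tgt mS mT D D' -> chute_invariants D D'.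
Proof.
case=> a [i [j [l [hl hi _ hD [P [Q [hP hQ ->]]]]]]].
by apply: hchute_invariants hD => //; lia.
Qed.

Lemma vertical_chute_invariants D D' :
  vertical_chute src tgt mS mT D D' -> chute_invariants D D'.
Proof.
move=> hv; have [a [i [j [l [hl hi _ hD [P [Q [hP hQ eD']]]]]]]] := vertical_chute_swap hv.
have [|cD cD' vD vD' _] := hchute_invariants uT uS _ hi hP hQ hD; first lia.
rewrite -eD' in cD cD' vD vD'; split; last exact: ltT_map_vchute.
- by move/u_compatible_swapE/cD/u_compatible_swapE.
- by move/u_compatible_swapE/cD'/u_compatible_swapE.
- by move/concurrent_vertex_map_swapE/vD/concurrent_vertex_map_swapE.
- by move/concurrent_vertex_map_swapE/vD'/concurrent_vertex_map_swapE.
Qed.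

Lemma chute_move_invariants D D' : chute_move src tgt mS mT D D' -> chute_invariants D D'.
Proof. by case=> [/horizontal_chute_invariants | /vertical_chute_invariants]. Qed.

End Chutes.

Theorem lemma3p9 (VS VT : finType) (r : nat) (src : 'I_r -> VS) (tgt : 'I_r -> VT)
    (mS : VS -> nat) (mT : VT -> nat) (uS : VS -> nat) (uT : VT -> nat)
    (hT : forall a : VT,
        [/\ 0 < uT a, uT a <= minn (rows_tgt mT a) (cols_tgt src tgt mS a)
          & uT a <= v_tgt src tgt uS a])
    (hS : forall b : VS,
        [/\ 0 < uS b, uS b <= minn (rows_src src tgt mT b) (cols_src mS b)
          & uS b <= v_src src tgt uT b]) :
  let comp := u_compatible src tgt mS mT uS uT in
  let cvm := concurrent_vertex_map src tgt mS mT uS uT in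
  let chute := chute_move src tgt mS mT in
  let ichute := inverse_chute_move src tgt mS mT in
  [/\ (forall D D' : {fset pos r}, comp D -> chute D D' -> comp D'),
      (forall C C' : {fset pos r}, cvm C -> chute C C' -> cvm C' /\ ltT_map C' C),
      (forall D D' : {fset pos r}, comp D -> ichute D D' -> comp D') &
      (forall C C' : {fset pos r}, cvm C -> ichute C C' -> cvm C' /\ ltT_map C C')].
Proof.
move=> comp cvm chute ichute; split.
- by move=> D D' hD /(chute_move_invariants uS uT) [cD _ _ _ _]; apply: cD.
- by move=> C C' hC /(chute_move_invariants uS uT) [_ _ vC _ ?]; split=> //; apply: vC.
- by move=> D D' hD /(chute_move_invariants uS uT) [_ cD _ _ _]; apply: cD.
- by move=> C C' hC /(chute_move_invariants uS uT) [_ _ _ vC ?]; split=> //; apply: vC.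
Qed.
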